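(* Let $q=p^n$ with $p>2$ prime, let $g\ge 2$ be an integer with $\gcd(g,p)=1$, and let $c\in\mathbb{F}_q$ be such that $C': y^2=x^{2g+1}+c\,x^{g+1}+x$ is a (nonsingular) hyperelliptic curve of genus $g$ over $\mathbb{F}_q$. Let $s$ be the involution $s:(x,y)\mapsto\left(\frac1x,\frac{y}{x^{g+1}}\right)$ of $C'$ and $\omega:(x,y)\mapsto(x,-y)$ the hyperelliptic involution. Then: 1. The quotient curve $C'/\langle s\rangle$ is given (i.e. is birationally equivalent over $\mathbb{F}_q$ to the curve given) by $X_1': y^2=D_g(x)+c$ if $g$ is odd, and by $X_1': y^2=(x+2)(D_g(x)+c)$ if $g$ is even. 2. The quotient curve $C'/\langle s\omega\rangle$, where $s\omega:(x,y)\mapsto\left(\frac1x,-\frac{y}{x^{g+1}}\right)$, is given by $X_2': y^2=(x^2-4)(D_g(x)+c)$ if $g$ is odd, and by $X_2': y^2=(x-2)(D_g(x)+c)$ if $g$ is even.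
   Context: For $m\ge1$ and $\alpha$ in a field, the Dickson polynomial $D_m(x,\alpha)=\sum_{i=0}^{\lfloor m/2\rfloor}\frac{m}{m-i}\binom{m-i}{i}(-\alpha)^i x^{m-2i}$ is the unique polynomial satisfying $D_m\!\left(u+\frac{\alpha}{u},\alpha\right)=u^m+\left(\frac{\alpha}{u}\right)^m$; we write $D_m(x):=D_m(x,1)$. *)

From HB Require Import structures.
From mathcomp Require Import all_boot all_order all_algebra all_field.
Set Implicit Arguments. Unset Strict Implicit. Unset Printing Implicit Defensive.
Import Order.TTheory GRing.Theory Num.Theory.
Local Open Scope ring_scope.

Section Hyper.
Variable F : fieldType.

(* Dickson polynomial D_m(x) = D_m(x,1), coefficient m/(m-i) * C(m-i,i)
   (an integer) computed as the exact nat quotient (m * C(m-i,i)) / (m-i). *)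
Definition dickson (m : nat) : {poly F} :=
  \sum_(i < (m./2).+1)
     ((-1) ^+ i * ((m * 'C(m - i, i)) %/ (m - i))%N%:R) *: 'X^(m - 2 * i).

Definition Cpoly (g : nat) (c : F) : {poly F} :=
  'X^(2 * g + 1) + c *: 'X^(g + 1) + 'X.

Notation Fx := {fraction {poly F}}.
Definition xF : Fx := tofrac 'X.
Definition embP (p : {poly F}) : Fx := tofrac p.

Definition pevalF (p : {poly F}) (t : Fx) : Fx :=
  (map_poly (fun a : F => tofrac (a%:P)) p).[t].

Definition subst_inv (r : Fx) : Fx :=
  let e := frac (repr r) in pevalF e.1 (xF^-1) / pevalF e.2 (xF^-1).

(* The function field F(C) of y^2 = f(x): elements a + b*y with a,b in F(x),
   represented as pairs (a, b). *)
Definition K := (Fx * Fx)%type.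
Definition kzero : K := (0, 0).
Definition kadd (z w : K) : K := (z.1 + w.1, z.2 + w.2).
Definition kmul (f : {poly F}) (z w : K) : K :=
  (z.1 * w.1 + embP f * z.2 * w.2, z.1 * w.2 + z.2 * w.1).
Definition kconst (a : F) : K := (embP a%:P, 0).
Definition keval (f : {poly F}) (P : {poly F}) (u : K) : K :=
  foldr (fun a acc => kadd (kconst a) (kmul f acc u)) kzero P.

(* Pullbacks of the involutions of C' on its function field:
   s : (x,y) |-> (1/x, y/x^(g+1)),  s w : (x,y) |-> (1/x, -y/x^(g+1)). *)
Definition inv_s (g : nat) (z : K) : K :=
  (subst_inv z.1, subst_inv z.2 / xF ^+ g.+1).
Definition inv_sw (g : nat) (z : K) : K :=
  (subst_inv z.1, - (subst_inv z.2 / xF ^+ g.+1)).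

(* "C/<t> is birationally equivalent over F to the curve Y^2 = h(X)":
   the fixed field F(C)^t is F-isomorphic to the function field
   F(X)[Y]/(Y^2 - h(X)) of that curve, i.e. there are t-invariant u, v in
   F(C) with v^2 = h(u), such that the induced map F[X,Y]/(Y^2-h) -> F(C)
   (X |-> u, Y |-> v) is injective, and every t-invariant element is a
   quotient of elements of its image (so the induced map on the fraction
   field is onto F(C)^t). *)
Definition quotient_model (f : {poly F}) (t : K -> K) (h : {poly F}) : Prop :=
  exists u v : K,
    [/\ t u = u, t v = v,
        kmul f v v = keval f h u,
        (forall A B : {poly F},
            kadd (keval f A u) (kmul f (keval f B u) v) = kzero ->
            A = 0 /\ B = 0)
      & (forall z : K, t z = z ->
            exists A B D : {poly F},
              D != 0 /\
              kmul f z (keval f D u) = kadd (keval f A u) (kmul f (keval f B u) v))].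

End Hyper.

From HB Require Import structures.
From mathcomp Require Import all_boot all_order all_algebra all_field.
From mathcomp Require Import ring zify.
Set Implicit Arguments. Unset Strict Implicit. Unset Printing Implicit Defensive.
Import GRing.Theory.
Local Open Scope ring_scope.

(* The function field F(C') = F(x) + F(x) y is handled through the
   automorphism sigma : x |-> 1/x of F(x).  Both involutions act as
     a + b y  |->  sigma(a) + e sigma(b)/x^(g+1) y,    e = 1 (s), e = -1 (s w).
   1. Dickson polynomials: the coefficient recurrence gives the functional
      equation D_m(y + 1/y) = y^m + y^-m, hence f(x) = x^(g+1) (D_g(U) + c)
      with U = x + 1/x.
   2. sigma is a ring involution of F(x) whose fixed field is F(U), and U is
      transcendental over F (clear denominators and look at constant terms).
   3. Generic quotient: if w <> 0 solves e sigma(w)/x^(g+1) = w, the fixed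
      field of the involution is F(U, w y), and (w y)^2 = f w^2.
   4. The four solutions w = x^-(k+1), (x+1)/x^(k+1), (x^2-1)/x^(k+2),
      (x-1)/x^(k+1) (g = 2k+1 or 2k) give x^(g+1) w^2 = 1, U+2, U^2-4, U-2.
   The field identities of step 4 are proved in an abstract field with a
   morphism inverting x, since field normalisation does not run on F(x).
   The arithmetic hypotheses of theorem1 only make C' a curve of genus g;
   the quotient computation holds over any field. *)

Definition dickson_coef (m i : nat) : nat := ((m * 'C(m - i, i)) %/ (m - i))%N.

Lemma dickson_coef_small m i : (m./2 < i)%N -> dickson_coef m i = 0%N.
Proof. by move=> lt_m2_i; rewrite /dickson_coef bin_small ?muln0 ?div0n //; lia. Qed.

Lemma dickson_coef0 m : (0 < m)%N -> dickson_coef m 0 = 1%N.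
Proof. by move=> m_gt0; rewrite /dickson_coef subn0 bin0 muln1 divnn m_gt0. Qed.

(* Division-free form: m/n * C(n, i+1) = C(n, i+1) + C(n-1, i) for n = m-i-1,
   using (i+1) C(n, i+1) = n C(n-1, i). *)
Lemma dickson_coefS m i : (i.+1 < m)%N ->
  dickson_coef m i.+1 = ('C(m - i.+1, i.+1) + 'C(m - i.+2, i))%N.
Proof.
move=> lt_i1_m; rewrite /dickson_coef.
set n := (m - i.+1)%N.
have n_gt0 : (0 < n)%N by rewrite /n; lia.
have -> : (m - i.+2 = n.-1)%N by rewrite /n; lia.
have -> : (m = n + i.+1)%N by rewrite /n; lia.
by rewrite mulnDl -mul_bin_diag -mulnDr mulKn.
Qed.

(* The recurrence D_(m+2) = x D_(m+1) - D_m, read on coefficients. *)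
Lemma dickson_coef_rec m j : (1 <= m)%N -> (j < m)%N ->
  dickson_coef m.+2 j.+1 = (dickson_coef m.+1 j.+1 + dickson_coef m j)%N.
Proof.
move=> m_ge1; case: j => [|k] lt_j_m.
  by rewrite dickson_coef0 // !dickson_coefS ?bin1 ?bin0 //; lia.
rewrite !dickson_coefS; try lia.
rewrite !subSS.
have -> : (m - k = (m - k.+2).+2)%N by lia.
have -> : (m - k.+1 = (m - k.+2).+1)%N by lia.
by rewrite !binS; lia.
Qed.

Definition dickson_sum (R : comNzRingType) (t : R) (m : nat) : R :=
  \sum_(i < m) ((-1) ^+ i * (dickson_coef m i)%:R) * t ^+ (m - 2 * i).

Lemma dickson_sum_rec (R : comNzRingType) (t : R) m : (1 <= m)%N ->
  dickson_sum t m.+2 = t * dickson_sum t m.+1 - dickson_sum t m.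
Proof.
move=> m_ge1; rewrite /dickson_sum big_ord_recl big_ord_recr /=.
rewrite (@dickson_coef_small m.+2 (bump 0 m)); last by rewrite /bump; lia.
rewrite mulr0n mulr0 mul0r addr0 [in t * _]big_ord_recl mulrDr.
rewrite !dickson_coef0 // expr0 !mul1r muln0 !subn0 -exprS -addrA; congr (_ + _).
rewrite mulr_sumr -sumrB; apply: eq_bigr => j _.
rewrite /bump /= !add1n dickson_coef_rec //.
have -> : (m.+2 - 2 * j.+1 = m - 2 * j)%N by lia.
case: (leqP (2 * j.+1) m.+1) => hj.
  have -> : (m - 2 * j = (m.+1 - 2 * j.+1).+1)%N by lia.
  by rewrite natrD !exprS; ring.
by rewrite (@dickson_coef_small m.+1 j.+1) ?add0n ?exprS; [ring | lia].
Qed.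

(* By induction along the recurrence, using (y + 1/y)(y^n + y^-n)
   = (y^(n+1) + y^-(n+1)) + (y^(n-1) + y^-(n-1)). *)
Lemma dickson_sum_inv (R : fieldType) (y : R) m : y != 0 -> (1 <= m)%N ->
  dickson_sum (y + y^-1) m = y ^+ m + y ^- m.
Proof.
move=> y_neq0 m_ge1.
suff two_steps n : dickson_sum (y + y^-1) n.+1 = y ^+ n.+1 + y ^- n.+1 /\
                   dickson_sum (y + y^-1) n.+2 = y ^+ n.+2 + y ^- n.+2.
  by case: m m_ge1 => // n _; case: (two_steps n).
elim: n => [|n [IH1 IH2]].
  rewrite /dickson_sum !big_ord_recr !big_ord0 /= !add0r !dickson_coef0 //.
  have -> : dickson_coef 2 1 = 2%N by [].
  by rewrite !muln0 muln1 !subn0 subnn; split; field.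
split=> //; rewrite dickson_sum_rec // IH1 IH2 !exprS !invfM.
by field; rewrite ?expf_neq0.
Qed.

(* The terms of dickson past index m/2 vanish, so it evaluates to dickson_sum. *)
Lemma horner_dickson (R : fieldType) (t : R) m : (1 <= m)%N ->
  (dickson R m).[t] = dickson_sum t m.
Proof.
move=> m_ge1; rewrite /dickson horner_sum.
under eq_bigr => i _ do rewrite hornerZ hornerXn.
rewrite /dickson_sum (big_ord_widen m
  (fun i => (-1) ^+ i * (dickson_coef m i)%:R * t ^+ (m - 2 * i))); last lia.
rewrite big_mkcond /=; apply: eq_bigr => i _; case: ifP => // /negbT.
by rewrite -leqNgt => lt_m2_i; rewrite dickson_coef_small ?mulr0 ?mul0r //; lia.
Qed.

(* The Dickson polynomials are defined over the prime ring. *)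
Lemma map_dickson (R S : fieldType) (f : {rmorphism R -> S}) m :
  map_poly f (dickson R m) = dickson S m.
Proof.
rewrite /dickson rmorph_sum /=; apply: eq_bigr => i _.
by rewrite map_polyZ map_polyXn rmorphM rmorphXn rmorphN1 rmorph_nat.
Qed.

Lemma dickson_functional (R : fieldType) (y : R) m : y != 0 -> (1 <= m)%N ->
  (dickson R m).[y + y^-1] = y ^+ m + y ^- m.
Proof. by move=> y_neq0 m_ge1; rewrite horner_dickson // dickson_sum_inv. Qed.

Lemma tofrac_repr (R : idomainType) (r : {fraction R}) :
  r = tofrac (frac (repr r)).1 / tofrac (frac (repr r)).2.
Proof.
rewrite -[r in LHS](reprK r); set x := repr r; unlock tofrac.
set n := (frac x).1; set d := (frac x).2.
have d_neq0 : d != 0 by exact: denom_ratioP.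
transitivity (FracField.mul (\pi_({fraction R})%qT (Ratio n 1))
    (FracField.inv (\pi_({fraction R})%qT (Ratio d 1)))); last by [].
rewrite -FracField.pi_inv -FracField.pi_mul; apply/eqmodP.
rewrite /= FracField.equivfE /FracField.mulf /FracField.invf.
by rewrite !numden_Ratio ?oner_neq0 ?mul1r // mulr1 mulrC.
Qed.

Section SubstInv.
Variable F : fieldType.
Local Notation Fx := {fraction {poly F}}.
Local Notation X := (xF F).
Local Notation sig := (@subst_inv F).
Implicit Types (p q A B P : {poly F}) (t : Fx).

Lemma X_neq0 : X != 0.
Proof. by rewrite /xF tofrac_eq0 polyX_eq0. Qed.

Lemma tofracC_comm t : commr_rmorph ((@tofrac _ : {poly F} -> Fx) \o polyC) t.
Proof. by move=> a; rewrite /GRing.comm mulrC. Qed.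

Lemma pevalE p t : pevalF p t = horner_morph (tofracC_comm t) p.
Proof. by []. Qed.

Lemma pevalD p q t : pevalF (p + q) t = pevalF p t + pevalF q t.
Proof. by rewrite !pevalE rmorphD. Qed.
Lemma pevalN p t : pevalF (- p) t = - pevalF p t.
Proof. by rewrite !pevalE rmorphN. Qed.
Lemma pevalM p q t : pevalF (p * q) t = pevalF p t * pevalF q t.
Proof. by rewrite !pevalE rmorphM. Qed.
Lemma pevalC a t : pevalF a%:P t = tofrac a%:P.
Proof. by rewrite pevalE horner_morphC. Qed.
Lemma pevalX t : pevalF 'X t = t.
Proof. by rewrite pevalE horner_morphX. Qed.
Lemma pevalXn n t : pevalF 'X^n t = t ^+ n.
Proof. by rewrite pevalE rmorphXn /= horner_morphX. Qed.
Lemma peval_sum I (r : seq I) (P : pred I) (G : I -> {poly F}) t :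
  pevalF (\sum_(i <- r | P i) G i) t = \sum_(i <- r | P i) pevalF (G i) t.
Proof. by rewrite pevalE rmorph_sum. Qed.

Lemma peval_xF p : pevalF p X = tofrac p.
Proof.
elim/poly_ind: p => [|p a IH]; first by rewrite pevalE !rmorph0.
by rewrite pevalD pevalM IH pevalX pevalC /xF rmorphD rmorphM.
Qed.

(* Clearing denominators, x^n A(P/x) = sum_i a_i P^i x^(n-i) with n = deg A;
   its constant coefficient a_n P(0)^n is nonzero, so A(P/x) <> 0.
   This gives both the well-definedness of x |-> 1/x and the transcendence
   of x + 1/x. *)
Lemma peval_divX_neq0 P A : P`_0 != 0 -> A != 0 -> pevalF A (tofrac P / X) != 0.
Proof.
move=> P0_neq0 A_neq0; set n := (size A).-1.
have size_A : size A = n.+1 by rewrite /n prednK // lt0n size_poly_eq0.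
pose Q := \sum_(i < size A) A`_i *: (P ^+ i * 'X^(n - i)).
have clear_den : pevalF A (tofrac P / X) * X ^+ n = tofrac Q.
  rewrite -[A in LHS]coefK poly_def peval_sum mulr_suml /Q rmorph_sum /=.
  apply: eq_bigr => i _.
  have le_i_n : (i <= n)%N by rewrite -ltnS -size_A.
  rewrite -!mul_polyC pevalM pevalC pevalXn !rmorphM -mulrA; congr (_ * _).
  rewrite !rmorphXn -/X -(subnKC le_i_n) exprD addKn mulrA expr_div_n.
  by rewrite divfK // expf_neq0 // X_neq0.
have Q0 : Q`_0 = lead_coef A * P`_0 ^+ n.
  have lt_n_A : (n < size A)%N by rewrite size_A.
  rewrite /Q coef_sum (bigD1 (Ordinal lt_n_A)) //= big1 => [|i ne_i_n].
    rewrite addr0 subnn expr0 mulr1 coefZ -horner_coef0 horner_exp horner_coef0.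
    by rewrite lead_coefE size_A.
  have lt_i_n : (i < n)%N.
    have : nat_of_ord i != n by apply: contra ne_i_n => /eqP eq_i_n; apply/eqP/val_inj.
    have : (i < n.+1)%N by rewrite -size_A.
    lia.
  by rewrite coefZ coefMXn subn_gt0 lt_i_n mulr0.
apply/negP => /eqP A_P0.
have : Q`_0 = 0.
  move: clear_den; rewrite A_P0 mul0r => /esym/eqP.
  by rewrite tofrac_eq0 => /eqP ->; rewrite coef0.
rewrite Q0 => /eqP; rewrite mulf_eq0 lead_coef_eq0 (negbTE A_neq0) /=.
by rewrite expf_eq0 (negbTE P0_neq0) andbF.
Qed.

(* 1/x is a root of no nonzero polynomial, so sigma is well defined. *)
Lemma peval_invX_neq0 d : d != 0 -> pevalF d X^-1 != 0.
Proof.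
have -> : X^-1 = tofrac 1 / X by rewrite rmorph1 div1r.
by apply: peval_divX_neq0; rewrite coef1 oner_neq0.
Qed.

Lemma subst_inv_frac n d : d != 0 ->
  sig (tofrac n / tofrac d) = pevalF n X^-1 / pevalF d X^-1.
Proof.
move=> d_neq0; rewrite /subst_inv /=.
set r := tofrac n / tofrac d; have r_repr := tofrac_repr r.
set e := frac (repr r) in r_repr *.
have e2_neq0 : e.2 != 0 by exact: denom_ratioP.
move/eqP: r_repr; rewrite /r eqr_div ?tofrac_eq0 // -!rmorphM tofrac_eq => /eqP cross.
have := congr1 (fun q : {poly F} => pevalF q X^-1) cross; rewrite !pevalM => peval_cross.
by apply/eqP; rewrite eqr_div ?peval_invX_neq0 // peval_cross.
Qed.

Lemma subst_inv_tofrac p : sig (tofrac p) = pevalF p X^-1.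
Proof.
rewrite -[tofrac p]divr1 -(rmorph1 (@tofrac _ : {poly F} -> Fx)).
by rewrite subst_inv_frac ?oner_neq0 // pevalC rmorph1 divr1.
Qed.

Lemma fracP (r : Fx) : exists2 nd : {poly F} * {poly F},
  nd.2 != 0 & r = tofrac nd.1 / tofrac nd.2.
Proof. by exists (frac (repr r)); [exact: denom_ratioP | exact: tofrac_repr]. Qed.

Lemma subst_invD a b : sig (a + b) = sig a + sig b.
Proof.
have [[n1 d1] /= d1_neq0 ->] := fracP a.
have [[n2 d2] /= d2_neq0 ->] := fracP b.
rewrite addf_div ?tofrac_eq0 // -!rmorphM -rmorphD !subst_inv_frac ?mulf_neq0 //.
by rewrite pevalD !pevalM addf_div ?peval_invX_neq0.
Qed.

Lemma subst_invN a : sig (- a) = - sig a.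
Proof.
have [[n d] /= d_neq0 ->] := fracP a.
by rewrite -mulNr -tofracN !subst_inv_frac // pevalN mulNr.
Qed.

Lemma subst_inv_is_zmod_morphism : zmod_morphism sig.
Proof. by move=> a b; rewrite subst_invD subst_invN. Qed.

Lemma subst_inv_is_monoid_morphism : monoid_morphism sig.
Proof.
split=> [|a b]; first by rewrite -tofrac1 subst_inv_tofrac pevalC tofrac1.
have [[n1 d1] /= d1_neq0 ->] := fracP a.
have [[n2 d2] /= d2_neq0 ->] := fracP b.
rewrite mulf_div -!rmorphM !subst_inv_frac ?mulf_neq0 // !pevalM.
by rewrite mulf_div.
Qed.

HB.instance Definition _ :=
  GRing.isZmodMorphism.Build Fx Fx sig subst_inv_is_zmod_morphism.
HB.instance Definition _ :=
  GRing.isMonoidMorphism.Build Fx Fx sig subst_inv_is_monoid_morphism.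

Lemma subst_inv_X : sig X = X^-1.
Proof. by rewrite subst_inv_tofrac pevalX. Qed.

Lemma subst_inv_peval p t : sig (pevalF p t) = pevalF p (sig t).
Proof.
elim/poly_ind: p => [|p a IH]; first by rewrite !pevalE !rmorph0.
by rewrite !pevalD !pevalM !pevalX !pevalC rmorphD rmorphM /= IH subst_inv_tofrac pevalC.
Qed.

Lemma subst_invK : involutive sig.
Proof.
move=> a; rewrite {1}(tofrac_repr a) subst_inv_frac; last exact: denom_ratioP.
rewrite rmorphM fmorphV /= !subst_inv_peval fmorphV /= subst_inv_X invrK !peval_xF.
exact/esym/tofrac_repr.
Qed.
End SubstInv.
Arguments X_neq0 {F}.
Arguments subst_inv_X {F}.

Section FixedField.
Variable F : fieldType.
Local Notation Fx := {fraction {poly F}}.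
Local Notation X := (xF F).
Local Notation sig := (@subst_inv F).
Local Notation U := (X + X^-1).
Implicit Types (p A B C D : {poly F}) (a m : Fx).

Lemma peval_U_eq0 A : pevalF A U = 0 -> A = 0.
Proof.
have -> : U = tofrac ('X^2 + 1) / X.
  by rewrite rmorphD rmorph1 rmorphXn -/X mulrDl div1r expr2 mulfK ?X_neq0.
move=> AU0; apply/eqP; apply/negPn/negP => A_neq0.
have P0 : ('X^2 + 1 : {poly F})`_0 != 0 by rewrite coefD coefXn coef1 add0r oner_neq0.
by have := peval_divX_neq0 P0 A_neq0; rewrite AU0 eqxx.
Qed.

Lemma subst_inv_U : sig U = U.
Proof. by rewrite rmorphD fmorphV /= subst_inv_X invrK addrC. Qed.

Lemma subst_inv_pevalU A : sig (pevalF A U) = pevalF A U.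
Proof. by rewrite subst_inv_peval subst_inv_U. Qed.

(* The F[U]-module F[U] + F[U] x, a ring containing F[x] since
   x^2 = U x - 1, and stable under sigma since sigma x = U - x. *)
Definition in_UX_span m := exists A B, m = pevalF A U + pevalF B U * X.

Lemma X_sqr : X * X = U * X - 1.
Proof. by rewrite mulrDl mulVf ?X_neq0 // addrK. Qed.

Lemma UX_span_tofrac p : in_UX_span (tofrac p).
Proof.
elim/poly_ind: p => [|p c [A [B IH]]].
  by exists 0, 0; rewrite rmorph0 !pevalE !rmorph0 mul0r addr0.
exists (c%:P - B), (A + B * 'X).
rewrite tofracD tofracM IH !pevalD pevalN !pevalM pevalC pevalX -/X mulrDl -mulrA X_sqr.
by ring.
Qed.

Lemma UX_span_mul a m : in_UX_span a -> in_UX_span m -> in_UX_span (a * m).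
Proof.
move=> [A1 [B1 ->]] [A2 [B2 ->]].
exists (A1 * A2 - B1 * B2), (A1 * B2 + B1 * A2 + B1 * B2 * 'X).
rewrite pevalD pevalN !pevalD !pevalM pevalX.
set a1 := pevalF A1 U; set a2 := pevalF A2 U.
set b1 := pevalF B1 U; set b2 := pevalF B2 U.
transitivity (a1 * a2 + (a1 * b2 + b1 * a2) * X + b1 * b2 * (X * X)); first by ring.
by rewrite X_sqr; ring.
Qed.

Lemma UX_span_subst_inv m : in_UX_span m -> in_UX_span (sig m).
Proof.
move=> [A [B ->]]; exists (A + B * 'X), (- B).
rewrite rmorphD rmorphM /= !subst_inv_pevalU subst_inv_X pevalD pevalM pevalX pevalN.
have -> : X^-1 = U - X by rewrite [X + _]addrC addrK.
by ring.
Qed.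

Lemma invX_neq_X : X^-1 != X.
Proof.
apply/negP => /eqP invX.
have : X * X = 1 by rewrite -{1}invX mulVf ?X_neq0.
rewrite /xF -rmorphM -tofrac1 => /eqP; rewrite tofrac_eq.
by move=> /eqP/(congr1 (size : {poly F} -> nat)); rewrite -expr2 size_polyXn size_poly1.
Qed.

(* In the basis 1, x the involution sigma fixes exactly the first coordinate. *)
Lemma UX_span_fixed m : in_UX_span m -> sig m = m -> exists A, m = pevalF A U.
Proof.
move=> [A [B ->]] fixed; exists A.
move: fixed; rewrite rmorphD rmorphM /= !subst_inv_pevalU subst_inv_X => /eqP.
rewrite -subr_eq0.
have -> : pevalF A U + pevalF B U / X - (pevalF A U + pevalF B U * X) =
  pevalF B U * (X^-1 - X) by ring.
rewrite mulf_eq0 subr_eq0 (negbTE invX_neq_X) orbF => /eqP ->.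
by rewrite mul0r addr0.
Qed.

(* The fixed field of sigma is F(U): a = n/d with d sigma(d) and
   n sigma(d) both sigma-invariant elements of F[U] + F[U] x. *)
Lemma subst_inv_fixed a : sig a = a ->
  exists C D, D != 0 /\ a * pevalF D U = pevalF C U.
Proof.
have [[n d] /= d_neq0 ->] := fracP a => fixed.
pose E := tofrac d * sig (tofrac d).
pose N := tofrac n * sig (tofrac d).
have span_E : in_UX_span E.
  by apply: UX_span_mul; [apply: UX_span_tofrac | apply/UX_span_subst_inv/UX_span_tofrac].
have span_N : in_UX_span N.
  by apply: UX_span_mul; [apply: UX_span_tofrac | apply/UX_span_subst_inv/UX_span_tofrac].
have fixed_E : sig E = E by rewrite /E rmorphM /= subst_invK mulrC.
have a_E : tofrac n / tofrac d * E = N by rewrite /E /N mulrA divfK // tofrac_eq0.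
have fixed_N : sig N = N by rewrite -a_E rmorphM /= fixed fixed_E.
have [D E_D] := UX_span_fixed span_E fixed_E.
have [C N_C] := UX_span_fixed span_N fixed_N.
exists C, D; split; last by rewrite -E_D a_E N_C.
have E_neq0 : E != 0 by rewrite mulf_neq0 // ?fmorph_eq0 tofrac_eq0.
by apply: contraNneq E_neq0 => D0; rewrite E_D D0 !pevalE rmorph0.
Qed.

End FixedField.

(* Identities in a field R with a ring morphism s such that s x = 1/x;
   they are instantiated with R = F(x) and s = sigma. *)
Section InvertingMorphism.
Variables (R : fieldType) (s : {rmorphism R -> R}) (x : R).
Hypotheses (x_neq0 : x != 0) (s_x : s x = x^-1).

Lemma twisted_ratio_fixed (e Y b w : R) : e != 0 -> Y != 0 -> w != 0 ->
  e * (s b / Y) = b -> e * (s w / Y) = w -> s (b / w) = b / w.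
Proof.
move=> e_neq0 Y_neq0 w_neq0 tb tw.
have s_twisted z : e * (s z / Y) = z -> s z = z * Y / e.
  by move=> tz; rewrite -{2}tz; field; rewrite ?e_neq0 ?Y_neq0.
rewrite rmorphM fmorphV (s_twisted b tb) (s_twisted w tw).
by field; rewrite ?e_neq0 ?Y_neq0 ?w_neq0.
Qed.

Variable k : nat.

Lemma s_Xn : s (x ^+ k) = (x ^+ k)^-1.
Proof. by rewrite rmorphXn s_x exprVn. Qed.

Lemma expr_double : x ^+ k.*2 = x ^+ k * x ^+ k.
Proof. by rewrite -addnn exprD. Qed.

Lemma Xn_neq0 : x ^+ k != 0.
Proof. exact: expf_neq0. Qed.

(* The four solutions of the twisted equation, for g = 2k+1 or g = 2k and
   e = 1 (involution s) or e = -1 (involution s w), and the value of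
   x^(g+1) w^2 as a polynomial in U = x + 1/x. *)
Lemma twist_s_odd : 1 * (s (x * x ^+ k)^-1 / x ^+ k.*2.+2) = (x * x ^+ k)^-1.
Proof.
rewrite fmorphV rmorphM s_x s_Xn !exprS expr_double.
by move: (x ^+ k) Xn_neq0 => y y_neq0; field; rewrite ?x_neq0 ?y_neq0 ?oner_neq0.
Qed.

Lemma twist_s_even :
  1 * (s ((x + 1) / (x * x ^+ k)) / x ^+ k.*2.+1) = (x + 1) / (x * x ^+ k).
Proof.
rewrite !(rmorphM, fmorphV, rmorphD, rmorph1, s_x, s_Xn) exprS expr_double.
by move: (x ^+ k) Xn_neq0 => y y_neq0; field; rewrite ?x_neq0 ?y_neq0 ?oner_neq0.
Qed.

Lemma twist_sw_odd :
  -1 * (s ((x * x - 1) / (x * x * x ^+ k)) / x ^+ k.*2.+2) =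
  (x * x - 1) / (x * x * x ^+ k).
Proof.
rewrite !(rmorphM, fmorphV, rmorphB, rmorph1, s_x, s_Xn) !exprS expr_double.
by move: (x ^+ k) Xn_neq0 => y y_neq0; field; rewrite ?x_neq0 ?y_neq0 ?oner_neq0.
Qed.

Lemma twist_sw_even :
  -1 * (s ((x - 1) / (x * x ^+ k)) / x ^+ k.*2.+1) = (x - 1) / (x * x ^+ k).
Proof.
rewrite !(rmorphM, fmorphV, rmorphB, rmorph1, s_x, s_Xn) exprS expr_double.
by move: (x ^+ k) Xn_neq0 => y y_neq0; field; rewrite ?x_neq0 ?y_neq0 ?oner_neq0.
Qed.

Lemma square_s_odd : x ^+ k.*2.+2 * ((x * x ^+ k)^-1 * (x * x ^+ k)^-1) = 1.
Proof.
rewrite !exprS expr_double.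
by move: (x ^+ k) Xn_neq0 => y y_neq0; field; rewrite ?x_neq0 ?y_neq0 ?oner_neq0.
Qed.

Lemma square_s_even :
  x ^+ k.*2.+1 * ((x + 1) / (x * x ^+ k) * ((x + 1) / (x * x ^+ k))) =
  x + x^-1 + 2.
Proof.
rewrite exprS expr_double.
by move: (x ^+ k) Xn_neq0 => y y_neq0; field; rewrite ?x_neq0 ?y_neq0 ?oner_neq0.
Qed.

Lemma square_sw_odd :
  x ^+ k.*2.+2 * ((x * x - 1) / (x * x * x ^+ k) * ((x * x - 1) / (x * x * x ^+ k))) =
  (x + x^-1) ^+ 2 - 4.
Proof.
rewrite !exprS expr_double.
by move: (x ^+ k) Xn_neq0 => y y_neq0; field; rewrite ?x_neq0 ?y_neq0 ?oner_neq0.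
Qed.

Lemma square_sw_even :
  x ^+ k.*2.+1 * ((x - 1) / (x * x ^+ k) * ((x - 1) / (x * x ^+ k))) =
  x + x^-1 - 2.
Proof.
rewrite exprS expr_double.
by move: (x ^+ k) Xn_neq0 => y y_neq0; field; rewrite ?x_neq0 ?y_neq0 ?oner_neq0.
Qed.

End InvertingMorphism.

Section Quotients.
Variable F : fieldType.
Local Notation Fx := {fraction {poly F}}.
Local Notation X := (xF F).
Local Notation sig := (@subst_inv F).
Local Notation U := (X + X^-1).

Lemma pevalU_dickson m : (1 <= m)%N -> pevalF (dickson F m) U = X ^+ m + X ^- m.
Proof.
move=> m_ge1.
change ((map_poly ((@tofrac _) \o polyC) (dickson F m)).[U] = X ^+ m + X ^- m).
by rewrite map_dickson dickson_functional // X_neq0.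
Qed.

Lemma keval_fst (f P : {poly F}) (a : Fx) : keval f P (a, 0) = (pevalF P a, 0).
Proof.
rewrite /keval -[in RHS](polyseqK P).
elim: (polyseq P) => [|c s IH] /=; first by rewrite !pevalE rmorph0.
rewrite IH /kadd /kmul /kconst /= cons_poly_def pevalD pevalM pevalX pevalC.
by congr pair; rewrite ?mulr0 ?mul0r ?addr0 ?add0r // addrC.
Qed.

(* The generic quotient: if t acts on F(C) = F(x) + F(x) y by
   a + b y |-> sigma(a) + e sigma(b)/x^(g+1) y and the nonzero w solves the
   twisted equation with f w^2 = h(U), then F(C)^t = F(U, w y) is the
   function field of Y^2 = h(X), via X |-> U, Y |-> w y. *)
Lemma quotient_model_twist (f h : {poly F}) (t : K F -> K F) (g : nat) (e w : Fx) :
  (forall z, t z = (sig z.1, e * (sig z.2 / X ^+ g.+1))) ->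
  e != 0 -> w != 0 -> e * (sig w / X ^+ g.+1) = w ->
  embP f * w * w = pevalF h U ->
  quotient_model f t h.
Proof.
move=> t_def e_neq0 w_neq0 tw fw.
have Y_neq0 : X ^+ g.+1 != 0 by rewrite expf_neq0 ?X_neq0.
exists (U, 0), (0, w); split.
- by rewrite t_def /= subst_inv_U rmorph0 mul0r mulr0.
- by rewrite t_def /= rmorph0 tw.
- by rewrite keval_fst /kmul /= mul0r add0r fw mulr0 mul0r addr0.
- move=> A B; rewrite !keval_fst /kadd /kmul /= !mulr0 !mul0r !addr0 add0r.
  case=> /peval_U_eq0 -> /eqP; rewrite mulf_eq0 (negbTE w_neq0) orbF.
  by move=> /eqP/peval_U_eq0 ->.
- move=> [a b]; rewrite t_def /= => -[fixed_a tb].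
  have fixed_bw := twisted_ratio_fixed e_neq0 Y_neq0 w_neq0 tb tw.
  have [C1 [D1 [D1_neq0 aD1]]] := subst_inv_fixed fixed_a.
  have [C2 [D2 [D2_neq0 bwD2]]] := subst_inv_fixed fixed_bw.
  exists (C1 * D2), (C2 * D1), (D1 * D2); split; first exact: mulf_neq0.
  rewrite !keval_fst /kmul /kadd /= !mulr0 !mul0r !addr0 !add0r !pevalM.
  congr pair; first by rewrite mulrA aD1.
  rewrite -bwD2 mulrAC [b / w * _ * w]mulrAC divfK //.
  by rewrite -mulrA [pevalF D2 U * _]mulrC.
Qed.

(* f(x) = x^(g+1) (D_g(U) + c), from D_g(x + 1/x) = x^g + x^-g. *)
Lemma Cpoly_dickson g c : (1 <= g)%N ->
  embP (Cpoly g c) = X ^+ g.+1 * pevalF (dickson F g + c%:P) U.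
Proof.
move=> g_ge1; rewrite pevalD pevalU_dickson // pevalC /embP /Cpoly.
rewrite !tofracD -mul_polyC tofracM !tofracXn -/X.
rewrite !addn1 mul2n -addnn !exprS exprD !mulrDr mulfK ?expf_neq0 ?X_neq0 //.
by move: (X ^+ g) => Y; ring.
Qed.



Lemma XaddC_neq0 (a : F) : X + tofrac a%:P != 0.
Proof. by rewrite -tofracD tofrac_eq0 -size_poly_eq0 size_XaddC. Qed.

Lemma Xadd1_neq0 : X + 1 != 0.
Proof. by have := XaddC_neq0 1; rewrite tofrac1. Qed.

Lemma Xsub1_neq0 : X - 1 != 0.
Proof. by have := XaddC_neq0 (-1); rewrite polyCN tofracN tofrac1. Qed.

Lemma quotient_model_Cpoly g c (t : K F -> K F) (e w : Fx) (r : {poly F}) :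
  (1 <= g)%N -> (forall z, t z = (sig z.1, e * (sig z.2 / X ^+ g.+1))) ->
  e != 0 -> w != 0 -> e * (sig w / X ^+ g.+1) = w ->
  X ^+ g.+1 * (w * w) = pevalF r U ->
  quotient_model (Cpoly g c) t (r * (dickson F g + c%:P)).
Proof.
move=> g_ge1 t_def e_neq0 w_neq0 tw square_w.
apply: (quotient_model_twist t_def e_neq0 w_neq0 tw).
by rewrite Cpoly_dickson // pevalM -square_w -!mulrA [w * (w * _)]mulrA [w * w * _]mulrC.
Qed.

Lemma quotient_s_odd k c :
  quotient_model (Cpoly k.*2.+1 c) (inv_s k.*2.+1) (dickson F k.*2.+1 + c%:P).
Proof.
rewrite -[dickson F _ + _]mul1r.
apply: (quotient_model_Cpoly c (e := 1) (w := (X * X ^+ k)^-1)) => //.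
- by move=> z; rewrite mul1r.
- exact: oner_neq0.
- exact: invr_neq0 (mulf_neq0 X_neq0 (expf_neq0 k X_neq0)).
- exact: (twist_s_odd X_neq0 subst_inv_X k).
- by rewrite !pevalE rmorph1; exact: (square_s_odd X_neq0 k).
Qed.

Lemma quotient_s_even k c : (0 < k)%N ->
  quotient_model (Cpoly k.*2 c) (inv_s k.*2) (('X + 2%:P) * (dickson F k.*2 + c%:P)).
Proof.
move=> k_gt0.
apply: (quotient_model_Cpoly c (e := 1) (w := (X + 1) / (X * X ^+ k))).
- by rewrite -mul2n; lia.
- by move=> z; rewrite mul1r.
- exact: oner_neq0.
- exact: mulf_neq0 Xadd1_neq0 (invr_neq0 (mulf_neq0 X_neq0 (expf_neq0 k X_neq0))).
- exact: (twist_s_even X_neq0 subst_inv_X k).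
- rewrite pevalD pevalX pevalC rmorph_nat rmorph_nat.
  exact: (square_s_even X_neq0 k).
Qed.

Lemma quotient_sw_odd k c :
  quotient_model (Cpoly k.*2.+1 c) (inv_sw k.*2.+1)
    (('X ^+ 2 - 4%:P) * (dickson F k.*2.+1 + c%:P)).
Proof.
apply: (quotient_model_Cpoly c (e := -1) (w := (X * X - 1) / (X * X * X ^+ k))) => //.
- by move=> z; rewrite mulN1r.
- by rewrite oppr_eq0 oner_neq0.
- have -> : X * X - 1 = (X - 1) * (X + 1) by rewrite -subr_sqr expr1n expr2.
  apply: mulf_neq0; first exact: mulf_neq0 Xsub1_neq0 Xadd1_neq0.
  exact: invr_neq0 (mulf_neq0 (mulf_neq0 X_neq0 X_neq0) (expf_neq0 k X_neq0)).
- exact: (twist_sw_odd X_neq0 subst_inv_X k).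
- rewrite pevalD pevalN pevalXn pevalC rmorph_nat rmorph_nat.
  exact: (square_sw_odd X_neq0 k).
Qed.

Lemma quotient_sw_even k c : (0 < k)%N ->
  quotient_model (Cpoly k.*2 c) (inv_sw k.*2) (('X - 2%:P) * (dickson F k.*2 + c%:P)).
Proof.
move=> k_gt0.
apply: (quotient_model_Cpoly c (e := -1) (w := (X - 1) / (X * X ^+ k))).
- by rewrite -mul2n; lia.
- by move=> z; rewrite mulN1r.
- by rewrite oppr_eq0 oner_neq0.
- exact: mulf_neq0 Xsub1_neq0 (invr_neq0 (mulf_neq0 X_neq0 (expf_neq0 k X_neq0))).
- exact: (twist_sw_even X_neq0 subst_inv_X k).
- rewrite pevalD pevalN pevalX pevalC rmorph_nat rmorph_nat.
  exact: (square_sw_even X_neq0 k).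
Qed.

End Quotients.

Theorem theorem1 (F : finFieldType) (p g : nat) (c : F) :
  prime p -> p \in [pchar F] -> (2 < p)%N ->
  (2 <= g)%N -> coprime g p ->
  separable_poly (Cpoly g c) ->
  quotient_model (Cpoly g c) (inv_s g)
    (if odd g then dickson F g + c%:P
     else ('X + 2%:P) * (dickson F g + c%:P)) /\
  quotient_model (Cpoly g c) (inv_sw g)
    (if odd g then ('X ^+ 2 - 4%:P) * (dickson F g + c%:P)
     else ('X - 2%:P) * (dickson F g + c%:P)).
Proof.
move=> _ _ _ g_ge2 _ _.
have k_gt0 : (0 < g./2)%N by lia.
rewrite -(odd_double_half g); case: (odd g); rewrite ?add1n ?add0n /= odd_double /=.
- by split; [exact: quotient_s_odd | exact: quotient_sw_odd].
- by split; [exact: quotient_s_even | exact: quotient_sw_even].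
Qed.
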